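(* Let $A$ be a finite direct product of elementary abelian groups, written additively, let $U$ be an $F$-relevant subgroup of $\mathrm{Aut}(A)$, and let $N(U) = N_{\mathrm{Aut}(A)}(U)$. For $\delta, \lambda \in Z^2(U,A)$ we have $G_\delta \cong G_\lambda$ if and only if there exists $g \in N(U)$ with $g([\delta]) = [\lambda]$ in $H^2(U,A)$.
   Context: $U$ acts on $A$ naturally (as a group of automorphisms), and $Z^2(U,A)$, $B^2(U,A)$, $H^2(U,A)=Z^2(U,A)/B^2(U,A)$ are the groups of $2$-cocycles, $2$-coboundaries and the second cohomology group for this action; $[\delta] = \delta + B^2(U,A)$. For $\delta\in Z^2(U,A)$, $G_\delta$ denotes the extension of $A$ by $U$ defined by $\delta$ (the group on the set $U\times A$ with multiplication twisted by $\delta$ in the standard way, containing $A$ as a normal subgroup with quotient $U$ acting on $A$ via the given action). The group $N(U)$ acts on $Z^2(U,A)$ by $(g(\delta))(u,v) = g\big(\delta(g^{-1}ug, g^{-1}vg)\big)$ for $g\in N(U)$, $u,v\in U$; this leaves $B^2(U,A)$ invariant and induces an action on $H^2(U,A)$ by $g([\delta]) = [g(\delta)]$. A subgroup $N \le \mathrm{Aut}(A)$ centralizes a series through $A$ if there is an $N$-invariant series $A = A_1 > \cdots > A_{l+1} = \{1\}$ with $N$ acting trivially on each $A_i/A_{i+1}$; $U\le\mathrm{Aut}(A)$ is $F$-relevant if no non-trivial normal subgroup of $U$ centralizes a series through $A$. *)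

From HB Require Import structures.
From mathcomp Require Import all_boot all_order all_fingroup all_solvable.
Set Implicit Arguments. Unset Strict Implicit. Unset Printing Implicit Defensive.

Local Open Scope group_scope.

Section Defs.
Variable gT : finGroupType.
Implicit Types (A : {set gT}) (U N : {set {perm gT}}) (u v w g : {perm gT}).

Definition dprod_elem_abelian (A : {group gT}) : Prop :=
  exists n (H : 'I_n -> {group gT}) (p : 'I_n -> nat),
    \big[dprod/1]_(i < n) H i = A /\ forall i, (p i).-abelem (H i).

(* Composition of automorphisms as functions: (compp u v) x = u (v x).
   (MathComp's permutation product u * v applies u first.) *)
Definition compp u v : {perm gT} := (v * u)%g.

(* N centralizes a series A = A_1 > ... > A_{l+1} = 1 through A:
   the series is A :: s, each step is a proper inclusion, every term is
   N-invariant, and N acts trivially on each factor A_i / A_(i+1). *)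
Definition centralizes_series N (A : {group gT}) : Prop :=
  exists s : seq {group gT},
    [/\ path (fun H K : {group gT} =>
                (K \proper H) &&
                [forall n in N, forall x in H, (n x \in H) && (n x * x^-1 \in K)])
             A s
      & (last A s : {set gT}) = 1].

Definition F_relevant (U : {group {perm gT}}) (A : {group gT}) : Prop :=
  forall N : {group {perm gT}}, N <| U -> centralizes_series N A -> N :=: 1.

Definition cocycle2 U A (d : {perm gT} -> {perm gT} -> gT) : Prop :=
  (forall u v, u \in U -> v \in U -> d u v \in A) /\
  (forall u v w, u \in U -> v \in U -> w \in U ->
     d u v * d (compp u v) w = u (d v w) * d u (compp v w)).

Definition coboundary2 U A (d : {perm gT} -> {perm gT} -> gT) : Prop :=
  exists f : {perm gT} -> gT, (forall u, u \in U -> f u \in A) /\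
    (forall u v, u \in U -> v \in U ->
       d u v = u (f v) * (f (compp u v))^-1 * f u).

Definition cohomologous U A (d l : {perm gT} -> {perm gT} -> gT) : Prop :=
  coboundary2 U A (fun u v => d u v * (l u v)^-1).

Definition gact2 g (d : {perm gT} -> {perm gT} -> gT) :=
  fun u v => g (d (compp (compp g^-1 u) g) (compp (compp g^-1 v) g)).

Definition ext_carrier U A : {set {perm gT} * gT} :=
  [set x | (x.1 \in U) && (x.2 \in A)].

Definition ext_mul (d : {perm gT} -> {perm gT} -> gT)
  (x y : {perm gT} * gT) : {perm gT} * gT :=
  (compp x.1 y.1, x.2 * x.1 y.2 * d x.1 y.1).

Definition ext_isomorphic U A (d l : {perm gT} -> {perm gT} -> gT) : Prop :=
  exists f : {perm gT} * gT -> {perm gT} * gT,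
    [/\ {in ext_carrier U A &, injective f},
        f @: ext_carrier U A = ext_carrier U A
      & {in ext_carrier U A &, forall x y,
           f (ext_mul d x y) = ext_mul l (f x) (f y)}].

End Defs.

From HB Require Import structures.
From mathcomp Require Import all_boot all_order all_fingroup all_solvable.
Set Implicit Arguments. Unset Strict Implicit. Unset Printing Implicit Defensive.

Local Open Scope group_scope.

(* (<=) Given g in N(U) and a 1-cochain h with g(d) = l + dh, the map
   (u, a) |-> (u^g, g a + h(u^g)) is an isomorphism G_d -> G_l (section
   Twist).
   (=>) Let f : G_d -> G_l be an isomorphism.  The first components of the
   images of the kernel {1} x A form a normal subgroup M of U; as A is
   abelian, M moves each element of A only by elements fixed by M, so M
   centralizes the series A >= C_A(M) >= 1 (lemma
   centralizes_fixpts_series) and F-relevance forces M = 1.  Hence f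
   restricts to an automorphism alpha of A (kernel_aut), f induces
   conjugation by alpha on U, so alpha lies in N(U), and comparing second
   components of f((u,0)(v,0)) = f(u,0) f(v,0) gives alpha([d]) = [l]. *)

Lemma inj_self_map_onto (T : finType) (K : {set T}) (F : T -> T) :
  {in K &, injective F} -> {in K, forall x, F x \in K} -> F @: K = K.
Proof.
move=> Finj FK; apply/eqP; rewrite eqEcard card_in_imset // leqnn andbT.
by apply/subsetP=> _ /imsetP[x Kx ->]; apply: FK.
Qed.

Section FixedPoints.
Variables (gT : finGroupType) (A : {group gT}) (N : {set {perm gT}}).
Hypothesis sNA : N \subset Aut A.

Definition fixpts : {set gT} := [set x in A | [forall n in N, n x == x]].

Lemma fixpts_group_set : group_set fixpts.
Proof.
have AutN n : n \in N -> n \in Aut A by move=> Nn; apply: (subsetP sNA).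
apply/group_setP; split.
  rewrite inE group1; apply/forall_inP=> n /AutN An.
  by rewrite -(autmE An) morph1.
move=> x y; rewrite !inE => /andP[Ax fx] /andP[Ay fy]; rewrite groupM //.
apply/forall_inP=> n Nn; rewrite -(autmE (AutN _ Nn)) morphM //= autmE.
by rewrite (eqP (forall_inP fx n Nn)) (eqP (forall_inP fy n Nn)).
Qed.

Canonical fixpts_group := Group fixpts_group_set.

(* If N moves every x in A only by an N-fixed element, i.e. [A, N] lies in
   C_A(N), then N centralizes the series A >= C_A(N) >= 1 (with repetitions
   removed, since the series must be strictly decreasing). *)
Lemma centralizes_fixpts_series :
  (forall n x, n \in N -> x \in A -> n x * x^-1 \in fixpts) ->
  centralizes_series N A.
Proof.
move=> comm.
have stabA n x : n \in N -> x \in A -> n x \in A.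
  by move=> Nn; apply: Aut_closed; apply: (subsetP sNA).
have fixB n x : n \in N -> x \in fixpts -> n x = x.
  by move=> Nn; rewrite inE => /andP[_ /forall_inP/(_ n Nn)/eqP].
have sBA : fixpts \subset A by apply/subsetP=> x; rewrite inE => /andP[].
have [A1 | nA1] := eqVneq (A : {set gT}) 1; first by exists [::]; split.
have pA : [1 gT] \proper A by rewrite proper1G.
have [B1 | nB1] := eqVneq fixpts 1.
  exists [:: 1%G]; split=> //=; rewrite andbT pA /=.
  apply/forall_inP=> n Nn; apply/forall_inP=> x Ax.
  by rewrite stabA //= -B1 comm.
have [BA | nBA] := eqVneq fixpts A.
  exists [:: 1%G]; split=> //=; rewrite andbT pA /=.
  apply/forall_inP=> n Nn; apply/forall_inP=> x Ax.
  by rewrite fixB ?BA // Ax mulgV group1.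
exists [:: fixpts_group; 1%G]; split=> //=; rewrite andbT.
apply/andP; split.
  rewrite properEneq nBA sBA /=.
  apply/forall_inP=> n Nn; apply/forall_inP=> x Ax.
  by rewrite stabA ?comm.
rewrite proper1G nB1 /=.
apply/forall_inP=> n Nn; apply/forall_inP=> x Bx.
by rewrite fixB // Bx mulgV group1.
Qed.

End FixedPoints.

Section Extensions.
Variables (gT : finGroupType) (A : {group gT}) (U : {group {perm gT}}).
Hypotheses (abA : abelian A) (sUA : U \subset Aut A).

Local Notation K := (ext_carrier U A).

Lemma commA x y : x \in A -> y \in A -> x * y = y * x.
Proof. by move=> Ax Ay; apply: (centsP abA). Qed.

Lemma U_Aut u : u \in U -> u \in Aut A.
Proof. by move=> Uu; apply: (subsetP sUA). Qed.

Lemma Aut_mul u x y : u \in Aut A -> x \in A -> y \in A -> u (x * y) = u x * u y.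
Proof. by move=> Au; apply: (morphicP (Aut_morphic Au)). Qed.

Lemma Aut_inv u x : u \in Aut A -> x \in A -> u x^-1 = (u x)^-1.
Proof. by move=> Au Ax; rewrite -(autmE Au) morphV. Qed.

Lemma comppE (u v : {perm gT}) : compp u v = v * u. Proof. by []. Qed.

Lemma in_carrier u a : ((u, a) \in K) = (u \in U) && (a \in A).
Proof. by rewrite inE. Qed.

Lemma cocycle_1l d u : cocycle2 U A d -> u \in U -> d 1 u = d 1 1.
Proof.
case=> _ dC Uu; have := dC 1 1 u (group1 _) (group1 _) Uu.
by rewrite !comppE !mulg1 perm1 => /mulIg.
Qed.

Lemma cocycle_1r d u : cocycle2 U A d -> u \in U -> d u 1 = u (d 1 1).
Proof.
case=> _ dC Uu; have := dC u 1 1 Uu (group1 _) (group1 _).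
by rewrite !comppE !mul1g => /mulIg.
Qed.

Lemma ext_mul_kernel (d : {perm gT} -> {perm gT} -> gT) (a b : gT) :
  ext_mul d (1, a) (1, b) = (1, a * b * d 1 1).
Proof. by rewrite /ext_mul /= comppE mulg1 perm1. Qed.

Lemma ext_kernel_normal d y s : cocycle2 U A d -> y \in K -> s \in A ->
  exists2 s', s' \in A & ext_mul d y (1, s) = ext_mul d (1, s') y.
Proof.
case: y => w c [dA _]; rewrite in_carrier => /andP[Uw Ac] As.
exists ((c * w s * d w 1) * (c * d 1 w)^-1).
  by rewrite !(groupM, groupV) ?dA ?Aut_closed ?(U_Aut Uw).
by rewrite /ext_mul /= ?comppE mulg1 mul1g perm1 -[in RHS]mulgA mulgKV.
Qed.

Lemma conj_compp (u g : {perm gT}) : compp (compp g^-1 u) g = u ^ g^-1.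
Proof. by rewrite !comppE conjgE invgK. Qed.

Section Twist.
Variables (d l : {perm gT} -> {perm gT} -> gT) (g : {perm gT}).
Variable h : {perm gT} -> gT.
Hypotheses (dc : cocycle2 U A d) (lc : cocycle2 U A l).
Hypotheses (Ag : g \in Aut A) (nUg : g \in 'N(U)).
Hypothesis hA : forall u, u \in U -> h u \in A.
Hypothesis hE : forall u v, u \in U -> v \in U ->
  gact2 g d u v * (l u v)^-1 = u (h v) * (h (compp u v))^-1 * h u.

Definition twist (x : {perm gT} * gT) := (x.1 ^ g, g x.2 * h (x.1 ^ g)).

Lemma twist_carrier x : x \in K -> twist x \in K.
Proof.
case: x => u a; rewrite !in_carrier /= => /andP[Uu Aa].
have Uug : u ^ g \in U by rewrite memJ_norm.
by rewrite Uug groupM ?hA ?Aut_closed.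
Qed.

Lemma twist_inj : {in K &, injective twist}.
Proof.
move=> [u a] [v b] _ _ [/conjg_inj uv]; subst v.
by move/mulIg/perm_inj->.
Qed.

Lemma twist_cocycle u v : u \in U -> v \in U ->
  g (d u v) = (u ^ g) (h (v ^ g)) * (h (compp (u ^ g) (v ^ g)))^-1 *
              h (u ^ g) * l (u ^ g) (v ^ g).
Proof.
move=> Uu Uv; have UJ w : w \in U -> w ^ g \in U by move=> Uw; rewrite memJ_norm.
have := hE (UJ _ Uu) (UJ _ Uv).
by rewrite /gact2 !conj_compp !conjgK => <-; rewrite mulgKV.
Qed.

Lemma twist_mul x y : x \in K -> y \in K ->
  twist (ext_mul d x y) = ext_mul l (twist x) (twist y).
Proof.
case: x y => [u a] [v b]; rewrite !in_carrier => /andP[Uu Aa] /andP[Uv Ab].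
have [dA _] := dc; have [lA _] := lc.
have UJ w : w \in U -> w ^ g \in U by move=> Uw; rewrite memJ_norm.
rewrite /twist /ext_mul /=; congr (_, _); first by rewrite !comppE conjMg.
have -> : compp u v ^ g = compp (u ^ g) (v ^ g) by rewrite !comppE conjMg.
have Au := U_Aut Uu; have Aug := U_Aut (UJ _ Uu).
rewrite !(Aut_mul Ag) ?(Aut_mul Aug) ?groupM ?Aut_closed ?dA ?hA ?UJ //.
rewrite twist_cocycle // permJ.
set X := g a; set Y := g (u b); set H1 := h (u ^ g).
set H2 := (u ^ g) (h (v ^ g)); set H3 := h (compp (u ^ g) (v ^ g)).
set L := l (u ^ g) (v ^ g).
have AY : Y \in A by rewrite !Aut_closed.
have A1 : H1 \in A by rewrite hA ?UJ.
have A2 : H2 \in A by rewrite Aut_closed ?hA ?UJ.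
have A3 : H3 \in A by rewrite hA // comppE groupM ?UJ.
have AL : L \in A by rewrite lA ?UJ.
rewrite -!mulgA; congr (_ * _).
rewrite (commA AL A3) (mulgA H1 H3) (commA A1 A3) -mulgA mulKg.
by rewrite (mulgA H2 H1) (commA A2 A1) -mulgA (mulgA Y H1) (commA AY A1) -!mulgA.
Qed.

Lemma twist_ext_isomorphic : ext_isomorphic U A d l.
Proof.
exists twist; split; [exact: twist_inj | | exact: twist_mul].
exact: inj_self_map_onto twist_inj twist_carrier.
Qed.

End Twist.

Section Forward.
Variables (d l : {perm gT} -> {perm gT} -> gT).
Variable f : {perm gT} * gT -> {perm gT} * gT.
Hypotheses (dc : cocycle2 U A d) (lc : cocycle2 U A l).
Hypotheses (finj : {in K &, injective f}) (fim : f @: K = K).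
Hypothesis fM : {in K &, forall x y, f (ext_mul d x y) = ext_mul l (f x) (f y)}.

Local Notation d11 := (d 1 1).
Local Notation l11 := (l 1 1).

Lemma f_carrier x : x \in K -> f x \in K.
Proof. by move=> Kx; rewrite -fim imset_f. Qed.

Lemma f_onto y : y \in K -> exists2 x, x \in K & y = f x.
Proof. by move=> Ky; apply/imsetP; rewrite fim. Qed.

Lemma f1_in x : x \in K -> (f x).1 \in U.
Proof. by move/f_carrier; rewrite inE => /andP[]. Qed.

Lemma f2_in x : x \in K -> (f x).2 \in A.
Proof. by move/f_carrier; rewrite inE => /andP[]. Qed.

Lemma kernel_in a : a \in A -> (1, a) \in K.
Proof. by move=> Aa; rewrite in_carrier group1. Qed.

Lemma d11_in : d11 \in A. Proof. by case: dc => dA _; apply: dA. Qed.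
Lemma l11_in : l11 \in A. Proof. by case: lc => lA _; apply: lA. Qed.

Definition kernel_image : {set {perm gT}} := [set (f (1, a)).1 | a in A].

(* (1, -d(1,1)) is the identity of G_d, so its image is the identity of G_l,
   whose first component is 1. *)
Lemma f_unit1 : (f (1, d11^-1)).1 = 1.
Proof.
have Ke : (1, d11^-1) \in K by rewrite kernel_in ?groupV ?d11_in.
have := fM Ke Ke; rewrite ext_mul_kernel mulgKV.
move/(congr1 fst); rewrite /ext_mul /= comppE => e.
by have := congr1 (fun z => ((f (1, d11^-1)).1)^-1 * z) e; rewrite /= mulKg mulVg.
Qed.

Lemma kernel_image_group_set : group_set kernel_image.
Proof.
apply/group_setP; split.
  by apply/imsetP; exists d11^-1; rewrite ?groupV ?d11_in ?f_unit1.
move=> _ _ /imsetP[a Aa ->] /imsetP[b Ab ->].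
apply/imsetP; exists (b * a * d11); first by rewrite !groupM ?d11_in.
by rewrite -ext_mul_kernel fM ?kernel_in //= comppE.
Qed.

Canonical kernel_image_group := Group kernel_image_group_set.

(* Being the image of a normal subgroup of G_d, kernel_image is normal in U. *)
Lemma kernel_image_normal : kernel_image_group <| U.
Proof.
have sMU : kernel_image \subset U.
  by apply/subsetP=> _ /imsetP[a Aa ->]; apply: f1_in; rewrite kernel_in.
rewrite /normal sMU; apply/subsetP=> v Uv; rewrite inE.
apply/subsetP=> _ /imsetP[_ /imsetP[a Aa ->] ->].
have Kv1 : (v, 1) \in K by rewrite in_carrier Uv group1.
have [x Kx ex] := f_onto Kv1.
have [s' As' es] := ext_kernel_normal dc Kx Aa.
have := congr1 (fun z => (f z).1) es; rewrite /= !fM ?kernel_in // /ext_mul /= -ex /=.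
by rewrite !comppE => e; apply/imsetP; exists s' => //; rewrite conjgE e mulKg.
Qed.

(* If (1, s) and (1, s') have images with the same first component, then
   every element of kernel_image fixes the difference of their second
   components: compare the images of (1,t)(1,r) = (1,r)(1,t) for r = s, s'. *)
Lemma kernel_image_fix_quotient s s' t :
    s \in A -> s' \in A -> t \in A -> (f (1, s')).1 = (f (1, s)).1 ->
  let m := (f (1, t)).1 in
  m ((f (1, s)).2 * ((f (1, s')).2)^-1) = (f (1, s)).2 * ((f (1, s')).2)^-1.
Proof.
move=> As As' At e1 m.
have Am : m \in Aut A by apply/U_Aut/f1_in/kernel_in.
have Ab := f2_in (kernel_in As); have Ab' := f2_in (kernel_in As').
have Ac := f2_in (kernel_in At).
have swap r : r \in A -> ext_mul d (1, t) (1, r) = ext_mul d (1, r) (1, t).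
  by move=> Ar; rewrite !ext_mul_kernel (commA At Ar).
have := congr1 f (swap _ As); rewrite !fM ?kernel_in // /ext_mul /= -/m.
case=> _ e3.
have := congr1 f (swap _ As'); rewrite !fM ?kernel_in // /ext_mul /= -/m e1.
case=> _ e4.
have := congr2 (fun p q => p * q^-1) e3 e4; rewrite /= !invMg !mulgA !mulgK.
rewrite -(mulgA (f (1, t)).2) (commA Ac) ?mulgK; last first.
  by rewrite groupM ?groupV ?Aut_closed.
by rewrite (Aut_mul Am) ?groupV // (Aut_inv Am).
Qed.

(* Conjugating the kernel element (1, s) past a preimage of (1, x - l(1,1))
   produces (1, s') whose f-image differs from that of (1, s) by n x - x. *)
Lemma kernel_image_shift s x : s \in A -> x \in A ->
  let n := (f (1, s)).1 in
  exists2 s', s' \in A & (f (1, s')).1 = n /\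
    (f (1, s)).2 * ((f (1, s')).2)^-1 = n x * x^-1.
Proof.
move=> As Ax n.
have Un : n \in U by apply/f1_in/kernel_in.
have An := U_Aut Un; have Ab := f2_in (kernel_in As).
set a := x * l11^-1.
have Aa : a \in A by rewrite groupM ?groupV ?l11_in.
have [y Ky ey] := f_onto (kernel_in Aa).
have [s' As' es] := ext_kernel_normal dc Ky As.
exists s' => //.
have Ab' := f2_in (kernel_in As').
have := congr1 f es; rewrite !fM ?kernel_in // -ey /ext_mul /= -/n.
rewrite !comppE mulg1 mul1g perm1 => -[e1 e2]; split=> //.
rewrite -e1 (cocycle_1l lc Un) (cocycle_1r lc Un) in e2.
rewrite -[_ * _ * n l11]mulgA -(Aut_mul An) ?l11_in // (commA Aa Ab) in e2.
rewrite -mulgA /a mulgKV in e2.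
rewrite (commA Ab (groupVr Ab')).
by apply: (canRL (mulgK x)); rewrite -mulgA e2 mulKg.
Qed.

Lemma kernel_image_commutator n m x :
  n \in kernel_image -> m \in kernel_image -> x \in A -> m (n x * x^-1) = n x * x^-1.
Proof.
case/imsetP=> s As -> /imsetP[t At ->] Ax.
have [s' As' [e1 <-]] := kernel_image_shift As Ax.
exact: kernel_image_fix_quotient.
Qed.

Lemma kernel_image_centralizes : centralizes_series kernel_image A.
Proof.
have sMA : kernel_image \subset Aut A.
  by apply/subsetP=> _ /imsetP[a Aa ->]; apply/U_Aut/f1_in/kernel_in.
apply: centralizes_fixpts_series => // n x Mn Ax.
have An : n \in Aut A by apply: (subsetP sMA).
rewrite inE groupM ?groupV ?Aut_closed //=.
by apply/forall_inP=> m Mm; apply/eqP/kernel_image_commutator.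
Qed.

Hypothesis FR : F_relevant U A.

Lemma f_kernel_first a : a \in A -> (f (1, a)).1 = 1.
Proof.
move=> Aa; have : (f (1, a)).1 \in kernel_image_group by apply: imset_f.
by rewrite (FR kernel_image_normal kernel_image_centralizes) => /set1P.
Qed.

(* Identifying A with the kernel of G_d via a |-> (1, a - d(1,1)) (a group
   isomorphism), f induces a map of A into A; it is an automorphism. *)
Definition kernel_map a := (f (1, a * d11^-1)).2 * l11.

Lemma kernel_carrier a : a \in A -> (1, a * d11^-1) \in K.
Proof. by move=> Aa; rewrite kernel_in ?groupM ?groupV ?d11_in. Qed.

Lemma f_kernel a : a \in A -> f (1, a * d11^-1) = (1, kernel_map a * l11^-1).
Proof.
move=> Aa; apply: injective_projections => /=; last by rewrite mulgK.
by apply: f_kernel_first; rewrite groupM ?groupV ?d11_in.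
Qed.

Lemma kernel_map_in a : a \in A -> kernel_map a \in A.
Proof. by move=> Aa; rewrite groupM ?l11_in ?f2_in ?kernel_carrier. Qed.

Lemma kernel_map_morph a b : a \in A -> b \in A ->
  kernel_map (a * b) = kernel_map a * kernel_map b.
Proof.
move=> Aa Ab; have Ad := groupVr d11_in; have Al := groupVr l11_in.
have e : ext_mul d (1, a * d11^-1) (1, b * d11^-1) = (1, (a * b) * d11^-1).
  by rewrite ext_mul_kernel mulgA mulgKV -mulgA (commA Ad Ab) mulgA.
have := congr1 f e; rewrite fM ?kernel_carrier // !f_kernel ?groupM //.
rewrite ext_mul_kernel => -[e']; apply: (mulIg l11^-1); rewrite -e'.
by rewrite mulgA mulgKV -mulgA (commA Al (kernel_map_in Ab)) mulgA.
Qed.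

Lemma kernel_map_inj : {in A &, injective kernel_map}.
Proof.
move=> a b Aa Ab e.
have : f (1, a * d11^-1) = f (1, b * d11^-1) by rewrite !f_kernel // e.
by move/finj => /(_ (kernel_carrier Aa) (kernel_carrier Ab)) [/mulIg].
Qed.

Lemma kernel_map_sub : kernel_map @: A \subset A.
Proof. by apply/subsetP=> _ /imsetP[a Aa ->]; apply: kernel_map_in. Qed.

Definition kernel_aut : {perm gT} := perm_in kernel_map_inj kernel_map_sub.

Lemma kernel_autE : {in A, kernel_aut =1 kernel_map}.
Proof. exact: perm_inE. Qed.

Lemma kernel_aut_Aut : kernel_aut \in Aut A.
Proof.
rewrite inE perm_in_on /=; apply/morphicP=> x y Ax Ay.
by rewrite !kernel_autE ?groupM // kernel_map_morph.
Qed.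

(* Writing (u, c) = (1, c - d(1,1)) (u, 0) shows that f is determined by
   the kernel map and by its values at the points (u, 0). *)
Lemma f_decomp u c : u \in U -> c \in A ->
  f (u, c) = ((f (u, 1)).1, kernel_map c * (f (u, 1)).2).
Proof.
move=> Uu Ac; have Ku1 : (u, 1) \in K by rewrite in_carrier Uu group1.
have e : ext_mul d (1, c * d11^-1) (u, 1) = (u, c).
  by rewrite /ext_mul /= comppE mulg1 perm1 mulg1 (cocycle_1l dc Uu) mulgKV.
rewrite -{1}e fM ?kernel_carrier // f_kernel // /ext_mul /= comppE mulg1 perm1.
rewrite (cocycle_1l lc (f1_in Ku1)); congr (_, _).
by rewrite -!mulgA (commA (f2_in Ku1) l11_in) mulKg.
Qed.

Lemma f_first_twists u a : u \in U -> a \in A ->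
  (f (u, 1)).1 (kernel_map a) = kernel_map (u a).
Proof.
move=> Uu Aa; have Au := U_Aut Uu; have Aua := Aut_closed Au Aa.
have Ku1 : (u, 1) \in K by rewrite in_carrier Uu group1.
have Ab := U_Aut (f1_in Ku1); have Ap := f2_in Ku1.
have e : ext_mul d (u, 1) (1, a * d11^-1) = (u, u a).
  rewrite /ext_mul /= comppE !mul1g (cocycle_1r dc Uu).
  by rewrite -(Aut_mul Au (groupM Aa (groupVr d11_in)) d11_in) mulgKV.
have := congr1 f e; rewrite fM ?kernel_carrier // f_kernel // (f_decomp Uu Aua).
rewrite /ext_mul /= (cocycle_1r lc (f1_in Ku1)) -mulgA.
rewrite -(Aut_mul Ab (groupM (kernel_map_in Aa) (groupVr l11_in)) l11_in) mulgKV.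
case=> _ e'; apply: (mulgI (f (u, 1)).2); rewrite e'.
by rewrite (commA (kernel_map_in Aua) Ap).
Qed.

Lemma f_first_conj u : u \in U -> (f (u, 1)).1 = u ^ kernel_aut.
Proof.
move=> Uu; have Ku1 : (u, 1) \in K by rewrite in_carrier Uu group1.
have Aal := kernel_aut_Aut.
apply: (eq_Aut (U_Aut (f1_in Ku1)) (groupJ (U_Aut Uu) Aal)) => x Ax.
have Ay : kernel_aut^-1 x \in A by apply: Aut_closed; rewrite ?groupV.
rewrite -(permKV kernel_aut x) permJ !kernel_autE ?(Aut_closed (U_Aut Uu)) //.
exact: f_first_twists.
Qed.

Lemma kernel_aut_normalizes : kernel_aut \in 'N_(Aut A)(U).
Proof.
rewrite inE kernel_aut_Aut inE; apply/subsetP=> _ /imsetP[u Uu ->].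
by rewrite -f_first_conj // f1_in // in_carrier Uu group1.
Qed.

(* Comparing second components in f((u,0)(v,0)) = f(u,0) f(v,0) shows that
   kernel_aut(d) and l differ by the coboundary of the 1-cochain
   w |-> second component of f(w^(kernel_aut^-1), 0). *)
Lemma kernel_aut_cohomologous : cohomologous U A (gact2 kernel_aut d) l.
Proof.
have [dA _] := dc; have [lA _] := lc.
have NU : kernel_aut^-1 \in 'N(U).
  by rewrite groupV; case/setIP: kernel_aut_normalizes.
have KU w c : w \in U -> c \in A -> (w, c) \in K by move=> Uw Ac; rewrite in_carrier Uw Ac.
exists (fun w => (f (compp (compp kernel_aut^-1 w) kernel_aut, 1)).2); split.
  by move=> w Uw; apply: f2_in; rewrite conj_compp KU ?memJ_norm.
move=> u' v' Uu' Uv'; rewrite /gact2 !conj_compp.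
have Uu : u' ^ kernel_aut^-1 \in U by rewrite memJ_norm.
have Uv : v' ^ kernel_aut^-1 \in U by rewrite memJ_norm.
have -> : compp u' v' ^ kernel_aut^-1 =
          compp (u' ^ kernel_aut^-1) (v' ^ kernel_aut^-1).
  by rewrite !comppE conjMg.
set u := u' ^ kernel_aut^-1 in Uu *; set v := v' ^ kernel_aut^-1 in Uv *.
have bu : (f (u, 1)).1 = u' by rewrite f_first_conj // conjgKV.
have bv : (f (v, 1)).1 = v' by rewrite f_first_conj // conjgKV.
have Uuv : compp u v \in U by rewrite comppE groupM.
have e : ext_mul d (u, 1) (v, 1) = (compp u v, d u v).
  by rewrite /ext_mul /= -(autmE (U_Aut Uu)) morph1 !mul1g.
have := congr1 f e; rewrite fM ?KU // (f_decomp Uuv (dA _ _ Uu Uv)) /ext_mul /= bu bv.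
case=> _ e'.
have Au := f2_in (KU _ _ Uu (group1 A)).
have Auv := f2_in (KU _ _ Uuv (group1 A)).
have AL : l u' v' \in A by apply: lA.
rewrite kernel_autE ?dA //.
have -> : kernel_map (d u v) =
    (f (u, 1)).2 * u' (f (v, 1)).2 * l u' v' * ((f (compp u v, 1)).2)^-1.
  by rewrite e' mulgK.
rewrite -mulgA (commA (groupVr Auv) (groupVr AL)) mulgA mulgK.
by rewrite -mulgA (commA Au) ?groupM ?groupV ?Aut_closed ?U_Aut ?f2_in ?KU // mulgA.
Qed.

End Forward.

(* The main equivalence, for any abelian A. *)
Lemma ext_isomorphic_iff_cohomologous d l :
  F_relevant U A -> cocycle2 U A d -> cocycle2 U A l ->
  ext_isomorphic U A d l <->
  exists2 g, g \in 'N_(Aut A)(U) & cohomologous U A (gact2 g d) l.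
Proof.
move=> FR dc lc; split.
  case=> f [finj fim fM].
  exists (kernel_aut dc lc finj fim fM FR).
    exact: kernel_aut_normalizes.
  exact: kernel_aut_cohomologous.
case=> g /setIP[Ag nUg] [h [hA hE]].
exact: twist_ext_isomorphic dc lc Ag nUg hA hE.
Qed.

End Extensions.

Theorem theorem3p5 (gT : finGroupType) (A : {group gT})
    (U : {group {perm gT}})
    (d l : {perm gT} -> {perm gT} -> gT) :
  abelian A -> dprod_elem_abelian A ->
  U \subset Aut A -> F_relevant U A ->
  cocycle2 U A d -> cocycle2 U A l ->
  ext_isomorphic U A d l <->
  exists2 g, g \in 'N_(Aut A)(U) & cohomologous U A (gact2 g d) l.
Proof.
move=> abA _ sUA FR dc lc.
exact: ext_isomorphic_iff_cohomologous.
Qed.
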